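(* Let $n\ge 1$ and let $\varphi(x)$ be any finite Boolean combination of polynomial equations $t(x)=0$ and inequations $u(x)\neq 0$, with $t,u\in\mathbb{C}[x_1,\dots,x_n]$, in the variables $x\in\mathbb{C}^n$. Then there exist polynomials $p,q\in\mathbb{C}[a,b,x_1,\dots,x_n]$ (with $a,b$ single scalar variables) such that for all $x\in\mathbb{C}^n$: $$\varphi(x)\iff(\exists a\in\mathbb{C})(\forall b\in\mathbb{C})\;p(a,b,x)=0,$$ $$\varphi(x)\iff(\forall a\in\mathbb{C})(\exists b\in\mathbb{C})\;q(a,b,x)=0.$$
   Context: A Boolean combination of polynomial equations and inequations is a formula built from atomic formulas of the form $t(x)=0$ and $u(x)\neq 0$ (with $t,u$ polynomials in $x=(x_1,\dots,x_n)$) using finitely many applications of $\wedge,\vee,\neg$. *)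

From HB Require Import structures.
From mathcomp Require Import all_boot all_order all_algebra.
From mathcomp Require Import mpoly.
From mathcomp Require Import complex.
From mathcomp Require Import reals.
Set Implicit Arguments. Unset Strict Implicit. Unset Printing Implicit Defensive.
Import Order.TTheory GRing.Theory Num.Theory.
Local Open Scope ring_scope.

Inductive pformula (K : comNzRingType) (n : nat) : Type :=
| PEq  of {mpoly K[n]}
| PNeq of {mpoly K[n]}
| PAnd of pformula K n & pformula K n
| POr  of pformula K n & pformula K n
| PNot of pformula K n.

Fixpoint pholds (K : comNzRingType) (n : nat) (f : pformula K n) (x : 'I_n -> K)
  : Prop :=
  match f with
  | PEq t => t.@[x] = 0
  | PNeq u => u.@[x] <> 0
  | PAnd f1 f2 => pholds f1 x /\ pholds f2 x
  | POr f1 f2 => pholds f1 x \/ pholds f2 x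
  | PNot f1 => ~ pholds f1 x
  end.

(* The point (a, b, x_1, ..., x_n) of K^(n+2): variable 0 is a, variable 1
   is b, variable i+2 is x_i. *)
Definition abx (K : comNzRingType) (n : nat) (a b : K) (x : 'I_n -> K)
  : 'I_n.+2 -> K :=
  fun i => match split (i : 'I_(2 + n)) with
           | inl j => if val j == 0%N then a else b
           | inr k => x k
           end.

From HB Require Import structures.
From mathcomp Require Import all_boot all_order all_algebra.
From mathcomp Require Import mpoly complex reals.
Set Implicit Arguments.
Unset Strict Implicit.
Local Open Scope ring_scope.
Import GRing.Theory.

(* Bring the formula into disjunctive normal form whose clauses are
   [t_1 = 0 /\ ... /\ t_k = 0 /\ u <> 0] (several inequations merge into one
   by taking products).  Such a clause holds at x iff for some a the
   univariate polynomial (a u(x) - 1) + t_1(x) b + ... + t_k(x) b^k in b is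
   zero, and a disjunction of clauses iff the product of these polynomials is
   zero for some a.  Over an algebraically closed field, a polynomial P in b
   is non-zero iff b P(b) - 1 has a root, which gives both the
   exists-forall form for the formula and, applied to the normal form of its
   negation, the forall-exists form. *)

Section DisjunctiveNormalForm.
Variables (K : idomainType) (n : nat).

Definition clause := (seq {mpoly K[n]} * {mpoly K[n]})%type.

Definition clause_holds (c : clause) (x : 'I_n -> K) : bool :=
  all (fun t => t.@[x] == 0) c.1 && (c.2.@[x] != 0).

Definition dnf_holds (d : seq clause) (x : 'I_n -> K) : bool :=
  has (clause_holds^~ x) d.

Definition dnf_and (d1 d2 : seq clause) : seq clause :=
  [seq (c1.1 ++ c2.1, c1.2 * c2.2) | c1 <- d1, c2 <- d2].

Definition clause_neg (c : clause) : seq clause :=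
  [seq ([::], t) | t <- c.1] ++ [:: ([:: c.2], 1)].

Lemma dnf_holds_cat d1 d2 x :
  dnf_holds (d1 ++ d2) x = dnf_holds d1 x || dnf_holds d2 x.
Proof. exact: has_cat. Qed.

Lemma clause_holds_merge (c1 c2 : clause) x :
  clause_holds (c1.1 ++ c2.1, c1.2 * c2.2) x
  = clause_holds c1 x && clause_holds c2 x.
Proof.
by rewrite /clause_holds /= all_cat mevalM mulf_eq0 negb_or andbACA.
Qed.

Lemma dnf_holds_and d1 d2 x :
  dnf_holds (dnf_and d1 d2) x = dnf_holds d1 x && dnf_holds d2 x.
Proof.
elim: d1 => [|c1 d1 IH] //=.
rewrite /dnf_holds /dnf_and /= in IH *.
rewrite has_cat IH has_map (eq_has (clause_holds_merge c1^~ x)) /=.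
case: (clause_holds c1 x) => /=; last by rewrite has_pred0.
by apply/idP/idP => [/orP [|/andP []] | ->].
Qed.

Lemma dnf_holds_clause_neg c x :
  dnf_holds (clause_neg c) x = ~~ clause_holds c x.
Proof.
rewrite dnf_holds_cat /dnf_holds has_map /clause_holds /= meval1 oner_neq0.
by rewrite !andbT orbF negb_and negbK -has_predC.
Qed.

Lemma dnf_neg d : exists d' : seq clause,
  forall x, dnf_holds d' x = ~~ dnf_holds d x.
Proof.
elim: d => [|c d [d' IH]].
  exists [:: ([::], 1)] => x.
  by rewrite /dnf_holds /clause_holds /= meval1 oner_neq0.
exists (dnf_and (clause_neg c) d') => x.
by rewrite dnf_holds_and dnf_holds_clause_neg IH /dnf_holds /= negb_or.
Qed.

Lemma pformula_dnf (phi : pformula K n) : exists d : seq clause,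
  forall x, pholds phi x <-> dnf_holds d x.
Proof.
elim: phi => [t|u|f1 [d1 H1] f2 [d2 H2]|f1 [d1 H1] f2 [d2 H2]|f [d H]].
- exists [:: ([:: t], 1)] => x.
  rewrite /dnf_holds /clause_holds /= meval1 oner_neq0 !andbT orbF.
  exact: (rwP eqP).
- exists [:: ([::], u)] => x.
  by rewrite /dnf_holds /clause_holds /= orbF; split=> /eqP.
- exists (dnf_and d1 d2) => x /=.
  by rewrite dnf_holds_and H1 H2; split=> [[-> ->] | /andP].
- exists (d1 ++ d2) => x /=.
  by rewrite dnf_holds_cat H1 H2; split=> [[] -> | /orP]; rewrite ?orbT.
- have [d' Hd'] := dnf_neg d.
  exists d' => x /=; rewrite Hd' H.
  by case: (dnf_holds d x); split=> //; apply.
Qed.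

End DisjunctiveNormalForm.

Lemma Poly_eq0 (R : nzSemiRingType) (s : seq R) :
  (Poly s == 0) = all (eq_op^~ 0) s.
Proof.
apply/eqP/allP => [P0 t /(nthP 0) [i lt_i_s <-] | s0].
  by rewrite -coef_Poly P0 coef0.
apply/polyP => i; rewrite coef_Poly coef0.
have [lt_i_s | le_s_i] := ltnP i (size s); last by rewrite nth_default.
by apply/eqP/s0/mem_nth.
Qed.

Lemma exists_mul_horner_eq1 (F : closedFieldType) (P : {poly F}) :
  P != 0 -> exists b, b * P.[b] = 1.
Proof.
move=> P0.
have size_XP1 : size ('X * P - 1) != 1%N.
  rewrite mulrC size_polyDl size_mulX // ?size_polyN ?size_poly1.
    by rewrite eqSS size_poly_eq0.
  by rewrite ltnS lt0n size_poly_eq0.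
have [b] := closed_rootP _ size_XP1.
by rewrite rootE !hornerE subr_eq0 => /eqP; exists b.
Qed.

Section PolynomialEncoding.
Variables (F : closedFieldType) (n : nat).
Implicit Types (a b : F) (x : 'I_n -> F).
Implicit Types (c : clause F n) (d : seq (clause F n)).

Definition Xa : {mpoly F[n.+2]} := 'X_(lshift n (ord0 : 'I_2)).
Definition Xb : {mpoly F[n.+2]} := 'X_(lshift n (ord_max : 'I_2)).

Definition liftx (t : {mpoly F[n]}) : {mpoly F[n.+2]} :=
  t \mPo [tuple 'X_(rshift 2 i) | i < n].

Lemma meval_Xa a b x : Xa.@[abx a b x] = a.
Proof.
by rewrite mevalXU /abx (_ : lshift n ord0 = unsplit (inl ord0)) // unsplitK.
Qed.

Lemma meval_Xb a b x : Xb.@[abx a b x] = b.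
Proof.
rewrite mevalXU /abx.
by rewrite (_ : lshift n ord_max = unsplit (inl ord_max)) // unsplitK.
Qed.

Lemma meval_liftx a b x t : (liftx t).@[abx a b x] = t.@[x].
Proof.
rewrite comp_mpoly_meval; apply: meval_eq => i.
rewrite tnth_mktuple mevalXU /abx.
by rewrite (_ : rshift 2 i = unsplit (inr i)) // unsplitK.
Qed.

Definition clause_poly a x c : {poly F} :=
  Poly ((a * c.2.@[x] - 1) :: [seq t.@[x] | t <- c.1]).

Definition dnf_poly a x d : {poly F} := \prod_(c <- d) clause_poly a x c.

Definition mhorner (s : seq {mpoly F[n.+2]}) : {mpoly F[n.+2]} :=
  foldr (fun t p => t + Xb * p) 0 s.

Definition clause_mpoly c : {mpoly F[n.+2]} :=
  mhorner ((Xa * liftx c.2 - 1) :: [seq liftx t | t <- c.1]).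

Definition dnf_mpoly d : {mpoly F[n.+2]} := \prod_(c <- d) clause_mpoly c.

Lemma meval_mhorner a b x s :
  (mhorner s).@[abx a b x] = (Poly [seq t.@[abx a b x] | t <- s]).[b].
Proof.
elim: s => [|t s IH] /=; first by rewrite meval0 horner0.
by rewrite horner_cons mevalD mevalM meval_Xb IH mulrC addrC.
Qed.

Lemma meval_dnf_mpoly a b x d :
  (dnf_mpoly d).@[abx a b x] = (dnf_poly a x d).[b].
Proof.
rewrite /dnf_mpoly /dnf_poly.
elim: d => [|c d IH]; first by rewrite !big_nil meval1 hornerC.
rewrite !big_cons mevalM hornerM IH meval_mhorner /= -map_comp.
rewrite mevalB mevalM meval1 meval_Xa meval_liftx.
by congr (_ * _); congr (cons_poly _ (Poly _)).[_]; apply: eq_map => t /=;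
  rewrite meval_liftx.
Qed.

Lemma clause_poly_eq0 a x c :
  (clause_poly a x c == 0)
  = (a * c.2.@[x] == 1) && all (fun t => t.@[x] == 0) c.1.
Proof. by rewrite Poly_eq0 /= subr_eq0 all_map. Qed.

Lemma dnf_holds_poly x d : dnf_holds d x <-> exists a, dnf_poly a x d = 0.
Proof.
split=> [/hasP [c cd /andP [ts0 u_neq0]] | [a /eqP]].
  exists (c.2.@[x])^-1; apply/eqP; rewrite prodf_seq_eq0; apply/hasP.
  by exists c => //; rewrite clause_poly_eq0 mulVf // eqxx.
rewrite prodf_seq_eq0; apply: sub_has => c /=.
rewrite clause_poly_eq0 /clause_holds => /andP [/eqP au1 ->] /=.
by apply: contra_eqN au1 => /eqP ->; rewrite mulr0 eq_sym oner_eq0.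
Qed.

Lemma dnf_holds_exists_forall x d :
  dnf_holds d x <-> exists a, forall b, (dnf_mpoly d).@[abx a b x] = 0.
Proof.
rewrite dnf_holds_poly; split=> [[a Pa0] | [a Pa_vanish]].
  by exists a => b; rewrite meval_dnf_mpoly Pa0 horner0.
exists a; apply/eqP; apply: contraT => /exists_mul_horner_eq1 [b].
by rewrite -meval_dnf_mpoly Pa_vanish mulr0 => /eqP; rewrite eq_sym oner_eq0.
Qed.

Lemma dnf_fails_forall_exists x d :
  ~ dnf_holds d x <->
  forall a, exists b, (Xb * dnf_mpoly d - 1).@[abx a b x] = 0.
Proof.
have mevalE a b :
    (Xb * dnf_mpoly d - 1).@[abx a b x] = b * (dnf_poly a x d).[b] - 1.
  by rewrite mevalB mevalM meval_Xb meval_dnf_mpoly meval1.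
rewrite dnf_holds_poly; split=> [Pa_neq0 a | Pa_invertible [a Pa0]].
  have /exists_mul_horner_eq1 [b Pb] : dnf_poly a x d != 0.
    by apply/eqP => Pa0; apply: Pa_neq0; exists a.
  by exists b; rewrite mevalE Pb subrr.
have [b] := Pa_invertible a; rewrite mevalE Pa0 horner0 mulr0 sub0r.
by move/eqP; rewrite oppr_eq0 oner_eq0.
Qed.

End PolynomialEncoding.

Theorem theorem1p1 (R : realType) (n : nat) (hn : (0 < n)%N)
    (phi : pformula R[i] n) :
  exists p q : {mpoly R[i][n.+2]},
    (forall x : 'I_n -> R[i],
        pholds phi x <->
        (exists a : R[i], forall b : R[i], p.@[abx a b x] = 0)) /\
    (forall x : 'I_n -> R[i],
        pholds phi x <->
        (forall a : R[i], exists b : R[i], q.@[abx a b x] = 0)).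
Proof.
have [d phi_d] := pformula_dnf phi.
have [d' d'_neg] := dnf_neg d.
exists (@dnf_mpoly R[i] n d), (@Xb R[i] n * @dnf_mpoly R[i] n d' - 1).
split=> x; rewrite phi_d; first exact: dnf_holds_exists_forall.
rewrite -(dnf_fails_forall_exists (F := R[i])) d'_neg.
by case: (dnf_holds d x); split.
Qed.
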